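(* Let $p$ be an odd prime and let $c$ be an integer such that $-c-1$ is a quadratic nonresidue modulo $p$. For every integer $n \ge 1$ define $$q_n = \left\lfloor \frac{(p-1)!\,(n^2 + c)}{p} \right\rfloor.$$ Then for all $n \ge 1$, $q_n$ has a prime factor smaller than $p$, and therefore $q_n$ is composite. *)

From mathcomp Require Import all_boot all_order all_algebra.
Set Implicit Arguments. Unset Strict Implicit. Unset Printing Implicit Defensive.
Import Order.TTheory GRing.Theory Num.Theory.
Local Open Scope ring_scope.

(* a is a quadratic nonresidue modulo p: a is not congruent to any square
   (in particular a is not divisible by p, since 0 = 0^2). *)
Definition quad_nonresidue (a : int) (p : nat) : Prop :=
  ~ exists x : int, (x ^+ 2 = a %[mod (p%:Z)])%Z.

(* q_n = floor((p-1)! (n^2 + c) / p); divz by a positive divisor is floor division. *)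
Definition qn (p : nat) (c : int) (n : nat) : int :=
  ((((p.-1)`!)%:Z * ((n%:Z) ^+ 2 + c)) %/ (p%:Z))%Z.

From mathcomp Require Import all_boot all_order all_algebra.
From mathcomp Require Import ring.
Import Order.TTheory GRing.Theory Num.Theory.
Local Open Scope ring_scope.

(** Write [(p-1)! (n^2 + c) = q_n p + r] with [0 <= r < p].  Every prime
    [l < p] divides [(p-1)!] and is coprime to [p], so it divides [q_n]
    as soon as it divides [r].  If [r = 0] take [l = 2]; if [r >= 2] take
    any prime factor of [r].  The case [r = 1] is impossible: by Wilson's
    theorem [(p-1)! = -1 (mod p)], so [r = 1] would give
    [n^2 = -c-1 (mod p)]. *)

Lemma dvdz_divz_of_modz (d m a : int) :
  coprimez d m -> (d %| a)%Z -> (d %| a %% m)%Z -> (d %| a %/ m)%Z.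
Proof.
move=> dm_coprime d_a d_amod; rewrite -(Gauss_dvdzl _ dm_coprime).
have -> : (a %/ m)%Z * m = a - (a %% m)%Z by rewrite {2}(divz_eq a m) addrK.
exact: rpredB.
Qed.

Lemma fact_mulz_eq1_mod {p : nat} {a : int} : prime p ->
  (((p.-1)`!)%:Z * a = 1 %[mod p%:Z])%Z -> (a = -1 %[mod p%:Z])%Z.
Proof.
move=> p_pr /eqP; rewrite eqz_mod_dvd => p_Fa; apply/eqP; rewrite eqz_mod_dvd.
have p_F1 : (p%:Z %| ((p.-1)`!)%:Z + 1)%Z.
  by rewrite -PoszD addn1 dvdzE /= -Wilson // prime_gt1.
have -> : a - -1 = (((p.-1)`!)%:Z + 1) * a - (((p.-1)`!)%:Z * a - 1) by ring.
by rewrite rpredB // dvdz_mulr.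
Qed.

Lemma prime_lt_dvdz_divz_fact_mul {p : nat} {b : int} :
  prime p -> (2 < p)%N -> (((p.-1)`!)%:Z %| b)%Z -> (b %% p%:Z)%Z != 1 ->
  exists2 r : nat, prime r /\ (r < p)%N & (r%:Z %| b %/ p%:Z)%Z.
Proof.
move=> p_pr p_gt2 F_b mod_neq1.
have p_gt0 : (0 < p)%N by exact: prime_gt0.
have [k def_k] : exists k : nat, (b %% p%:Z)%Z = k%:Z.
  by exists `|(b %% p%:Z)%Z|%N; rewrite gez0_abs // modz_ge0 // eqz_nat -lt0n.
have k_lt_p : (k < p)%N by rewrite -ltz_nat -def_k ltz_pmod.
have small_prime_dvd r : prime r -> (r < p)%N -> (r %| k)%N ->
    (r%:Z %| b %/ p%:Z)%Z.
  move=> r_pr r_lt_p r_k; apply: dvdz_divz_of_modz; rewrite ?def_k //.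
  - by rewrite -[coprimez _ _]/(coprime r p) prime_coprime // dvdn_prime2 // ltn_eqF.
  - apply: dvdz_trans F_b; rewrite dvdzE /= dvdn_fact // prime_gt0 //.
    by rewrite -ltnS prednK.
case: k def_k k_lt_p small_prime_dvd => [|[|k]] def_k k_lt_p small_prime_dvd.
- by exists 2%N; rewrite ?small_prime_dvd.
- by rewrite def_k eqxx in mod_neq1.
- have r_lt_p : (pdiv k.+2 < p)%N by exact: leq_ltn_trans (pdiv_leq _) k_lt_p.
  by exists (pdiv k.+2); rewrite ?pdiv_prime //; apply: small_prime_dvd;
    rewrite ?pdiv_prime ?pdiv_dvd.
Qed.

Lemma prime_dvd_lt_not_prime {r m : nat} :
  prime r -> (r %| m)%N -> (r < m)%N -> ~~ prime m.
Proof.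
move=> r_pr r_m r_lt_m; apply/negP => m_pr.
by move: r_m; rewrite dvdn_prime2 // => /eqP r_eq_m; rewrite r_eq_m ltnn in r_lt_m.
Qed.

Theorem theorem12 (p : nat) (c : int) :
  prime p -> odd p -> quad_nonresidue (- c - 1) p ->
  forall n : nat, (1 <= n)%N ->
    (exists2 r : nat, prime r /\ (r < p)%N & (r%:Z %| qn p c n)%Z) /\
    ((p%:Z <= qn p c n) -> ~~ prime `|qn p c n|%N).
Proof.
move=> p_pr p_odd c_nonres n _.
have mod_neq1 : ((((p.-1)`!)%:Z * (n%:Z ^+ 2 + c)) %% p%:Z)%Z != 1.
  apply/eqP => mod_eq1; apply: c_nonres; exists n%:Z; apply/eqP.
  rewrite eqz_mod_dvd.
  have -> : n%:Z ^+ 2 - (- c - 1) = n%:Z ^+ 2 + c - -1 by ring.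
  rewrite -eqz_mod_dvd; apply/eqP; apply: fact_mulz_eq1_mod => //.
  by rewrite mod_eq1 modz_small //= ltz_nat prime_gt1.
have [r [r_pr r_lt_p] r_q] := prime_lt_dvdz_divz_fact_mul p_pr
  (odd_prime_gt2 p_odd p_pr) (dvdz_mulr _ (dvdzz _)) mod_neq1.
split=> [|p_le_q]; first by exists r.
apply: (prime_dvd_lt_not_prime r_pr); first by move: r_q; rewrite dvdzE.
have q_ge0 : 0 <= qn p c n by apply: le_trans p_le_q.
by rewrite -ltz_nat gez0_abs // (lt_le_trans _ p_le_q) // ltz_nat.
Qed.
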